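(* Let $\kappa$ be an infinite cardinal. The lattices $B=\{(A,\,A\cap C,\,C) : A,C\in\mathcal{F}(\kappa),\ A\sim C\}$ and $E=\{(A,B,A\cap B): A,B\in\mathcal{F}(\kappa)\}$, both ordered componentwise, are not isomorphic.
   Context: $\mathcal{F}(\kappa)$ is the Boolean lattice of subsets $X\subseteq\kappa$ that are finite or cofinite. For $A,C\in\mathcal{F}(\kappa)$, $A\sim C$ means that either both $A,C$ are finite or both $\kappa\setminus A,\kappa\setminus C$ are finite. Both $B$ and $E$ are sublattices of the lattice $S$ of balanced triples $(A,B,C)\in\mathcal{F}(\kappa)^3$ (i.e. $A\cap B=A\cap C=B\cap C$) with $C\setminus((A\cap B)\cup(A\cap C)\cup(B\cap C))$ finite; $E$ is the range of the map $f(A,B,C)=(\kappa\setminus A,\kappa\setminus(B\cup C),\kappa\setminus(A\cup B\cup C))$ on $S$. *)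

From mathcomp Require Import all_boot.
From mathcomp Require Import boolp classical_sets cardinality.
Set Implicit Arguments. Unset Strict Implicit. Unset Printing Implicit Defensive.
Local Open Scope classical_set_scope.

Section Defs.
Variable T : Type.

(* Membership in F(kappa): finite or cofinite subsets of the carrier T. *)
Definition finF (X : set T) : Prop := finite_set X \/ finite_set (~` X).

Definition simF (A C : set T) : Prop :=
  (finite_set A /\ finite_set C) \/ (finite_set (~` A) /\ finite_set (~` C)).

Definition triple := (set T * set T * set T)%type.

Definition le3 (x y : triple) : Prop :=
  [/\ x.1.1 `<=` y.1.1, x.1.2 `<=` y.1.2 & x.2 `<=` y.2].

Definition Blat : set triple :=
  [set t | exists A C, [/\ finF A, finF C, simF A C & t = (A, A `&` C, C)]].

Definition Elat : set triple :=
  [set t | exists A B, [/\ finF A, finF B & t = (A, B, A `&` B)]].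

Definition order_iso (X Y : set triple) (f : triple -> triple) : Prop :=
  [/\ (forall x, X x -> Y (f x)),
      (forall x y, X x -> X y -> f x = f y -> x = y),
      (forall y, Y y -> exists2 x, X x & f x = y)
    & (forall x y, X x -> X y -> (le3 (f x) (f y) <-> le3 x y))].
End Defs.

From mathcomp Require Import all_boot.
From mathcomp Require Import boolp classical_sets cardinality.
Set Implicit Arguments. Unset Strict Implicit. Unset Printing Implicit Defensive.
Local Open Scope classical_set_scope.

(* Order isomorphisms preserve atoms (elements covering the least element),
   hence also whether an element lies above finitely many atoms.  In B the
   atoms are the triples ({t},∅,∅) and (∅,∅,{t}), so (A, A∩C, C) lies above
   finitely many atoms iff A and C are finite.  In E both (κ,∅,∅) and (∅,κ,∅)
   lie above infinitely many atoms, so their preimages in B have cofinite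
   coordinates.  The componentwise meet of these preimages is again in B and
   lies above infinitely many atoms, yet its image lies below (κ,∅,∅) and
   (∅,κ,∅), hence below (∅,∅,∅), and so above no atom at all. *)

Lemma set1_inj (U : Type) (s t : U) : [set s] = [set t] -> s = t.
Proof. by move=> st; have : [set t] s by rewrite -st. Qed.

Lemma sub_infinite_image (U V : Type) (S : set U) (Y : set V) (p : U -> V) :
  injective p -> infinite_set S -> p @` S `<=` Y -> infinite_set Y.
Proof.
move=> p_inj Sinf pSY; apply: sub_infinite_set pSY _.
by rewrite (eq_finite_set (inj_card_eq _)) // => s t _ _ /p_inj.
Qed.

Section Atoms.
Variable T : Type.
Implicit Types (X Y : set (triple T)) (x y z a : triple T).

Definition bot3 : triple T := (set0, set0, set0).

Lemma le3_trans y x z : le3 x y -> le3 y z -> le3 x z.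
Proof.
by move=> [x1 x2 x3] [y1 y2 y3]; split=> s /= => [/x1/y1|/x2/y2|/x3/y3].
Qed.

Lemma le3_bot3 x : le3 bot3 x.
Proof. by split. Qed.

Definition is_bottom X z := X z /\ forall w, X w -> le3 z w.

Definition is_atom X a :=
  [/\ X a, ~ is_bottom X a & forall z, X z -> le3 z a -> z = a \/ is_bottom X z].

Definition atoms_below X x := [set a | is_atom X a /\ le3 a x].

Section OrderIso.
Variables (X Y : set (triple T)) (f : triple T -> triple T).
Hypothesis iso : order_iso X Y f.

Lemma order_iso_bottom z : X z -> is_bottom Y (f z) <-> is_bottom X z.
Proof.
case: iso => fXY _ fsurj fle Xz; split=> -[_ zle].
  by split=> // w Xw; apply/(fle _ _ Xz Xw)/zle/fXY.
by split=> [|_ /fsurj[w Xw <-]]; [exact: fXY | apply/fle/zle].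
Qed.

Lemma order_iso_atom a : X a -> is_atom Y (f a) <-> is_atom X a.
Proof.
case: (iso) => fXY finj fsurj fle Xa; have botE := order_iso_bottom.
split=> -[_ abot aat]; split=> //; try exact: fXY.
- by move=> /(botE _ Xa).
- move=> z Xz /(fle _ _ Xz Xa)/(aat _ (fXY _ Xz)).
  by case=> [/(finj _ _ Xz Xa)->|/(botE _ Xz)]; [left|right].
- by move=> /(botE _ Xa).
- move=> _ /fsurj[z Xz <-] /(fle _ _ Xz Xa)/(aat _ Xz).
  by case=> [->|/(botE _ Xz)]; [left|right].
Qed.

Lemma atoms_below_order_iso x : X x -> atoms_below Y (f x) = f @` atoms_below X x.
Proof.
case: (iso) => fXY _ fsurj fle Xx; apply/seteqP; split.
  move=> _ [/[dup] -[/fsurj[a Xa <-] _ _] fa_atom fa_le]; exists a => //.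
  by split; [apply/(order_iso_atom Xa) | apply/(fle _ _ Xa Xx)].
move=> _ [a [/[dup] -[Xa _ _] a_atom a_le] <-].
by split; [apply/(order_iso_atom Xa) | apply/(fle _ _ Xa Xx)].
Qed.

Lemma finite_atoms_below_order_iso x : X x ->
  finite_set (atoms_below Y (f x)) <-> finite_set (atoms_below X x).
Proof.
move=> Xx; rewrite atoms_below_order_iso // (eq_finite_set (inj_card_eq _)) //.
move=> a b; rewrite !in_setE => -[[Xa _ _] _] [[Xb _ _] _].
by case: iso => _ finj _ _; apply: finj.
Qed.

End OrderIso.

Section WithBottom.
Variable X : set (triple T).
Hypothesis X_bot3 : X bot3.

Lemma is_bottomE z : is_bottom X z <-> X z /\ le3 z bot3.
Proof.
split=> [[Xz /(_ _ X_bot3)]|[Xz zbot]]; first by [].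
by split=> // w _; apply: le3_trans zbot (le3_bot3 w).
Qed.

Lemma atoms_below_bot3 x : le3 x bot3 -> atoms_below X x = set0.
Proof.
move=> xbot; apply/seteqP; split=> // a [[Xa + _] ax].
by rewrite is_bottomE; case; split=> //; apply: le3_trans ax xbot.
Qed.

Lemma is_atom_minimal a : X a -> ~ le3 a bot3 ->
  (forall z, le3 z a -> z = a \/ le3 z bot3) -> is_atom X a.
Proof.
move=> Xa abot amin; split=> // [/is_bottomE[] // | z Xz /amin[]]; first by left.
by right; apply/is_bottomE.
Qed.

Lemma is_atom_eq a p : is_atom X a -> X p -> ~ le3 p bot3 -> le3 p a -> p = a.
Proof. by move=> [_ _ aat] Xp pbot /(aat _ Xp)[|/is_bottomE[]]. Qed.

End WithBottom.

Lemma is_atom_not_bot3 X a : X bot3 -> is_atom X a -> ~ le3 a bot3.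
Proof. by move=> Xbot [Xa + _] abot; apply; apply/is_bottomE. Qed.

Definition pt1 t : triple T := ([set t], set0, set0).
Definition pt2 t : triple T := (set0, [set t], set0).
Definition pt3 t : triple T := (set0, set0, [set t]).

Lemma pt1_inj : injective pt1. Proof. by move=> s t []; apply: set1_inj. Qed.
Lemma pt2_inj : injective pt2. Proof. by move=> s t []; apply: set1_inj. Qed.

Lemma le3_pt1 t z : le3 z (pt1 t) -> z = pt1 t \/ le3 z bot3.
Proof.
case: z => [[P Q] R] [/= /subset_set1[]-> Q0 R0]; first by right; split.
by left; move: Q0 R0; rewrite !subset0 => -> ->.
Qed.

Lemma le3_pt2 t z : le3 z (pt2 t) -> z = pt2 t \/ le3 z bot3.
Proof.
case: z => [[P Q] R] [/= P0 /subset_set1[]-> R0]; first by right; split.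
by left; move: P0 R0; rewrite !subset0 => -> ->.
Qed.

Lemma pt1_not_bot3 t : ~ le3 (pt1 t) bot3. Proof. by case=> /(_ t erefl). Qed.
Lemma pt2_not_bot3 t : ~ le3 (pt2 t) bot3. Proof. by case=> _ /(_ t erefl). Qed.
Lemma pt3_not_bot3 t : ~ le3 (pt3 t) bot3. Proof. by case=> _ _ /(_ t erefl). Qed.

Lemma is_atom_pt1 X t : X bot3 -> X (pt1 t) -> is_atom X (pt1 t).
Proof.
by move=> Xbot Xt; apply: is_atom_minimal (@le3_pt1 t) => //; apply: pt1_not_bot3.
Qed.

Lemma is_atom_pt2 X t : X bot3 -> X (pt2 t) -> is_atom X (pt2 t).
Proof.
by move=> Xbot Xt; apply: is_atom_minimal (@le3_pt2 t) => //; apply: pt2_not_bot3.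
Qed.

End Atoms.

Section Lattices.
Variable T : Type.
Implicit Types A B C : set T.

Lemma finF_set0 : finF (@set0 T). Proof. by left. Qed.
Lemma finF_set1 (t : T) : finF [set t]. Proof. by left; apply: finite_set1. Qed.
Lemma finF_setT : finF [set: T]. Proof. by right. Qed.

Lemma Blat_finite A C : finite_set A -> finite_set C -> Blat (A, A `&` C, C).
Proof. by move=> fA fC; exists A, C; split=> //; [left|left|left]. Qed.

Lemma Blat_cofinite A C :
  cofinite_set A -> cofinite_set C -> Blat (A, A `&` C, C).
Proof. by move=> fA fC; exists A, C; split=> //; [right|right|right]. Qed.

Lemma Elat_finF A B : finF A -> finF B -> Elat (A, B, A `&` B).
Proof. by move=> fA fB; exists A, B. Qed.

Lemma Blat_bot3 : Blat (@bot3 T).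
Proof. by have := Blat_finite (finite_set0 T) (finite_set0 T); rewrite setI0. Qed.

Lemma Blat_pt1 (t : T) : Blat (pt1 t).
Proof. by have := Blat_finite (finite_set1 t) (finite_set0 T); rewrite setI0. Qed.

Lemma Blat_pt3 (t : T) : Blat (pt3 t).
Proof. by have := Blat_finite (finite_set0 T) (finite_set1 t); rewrite set0I. Qed.

Lemma Elat_bot3 : Elat (@bot3 T).
Proof. by have := Elat_finF finF_set0 finF_set0; rewrite setI0. Qed.

Lemma Elat_pt1 (t : T) : Elat (pt1 t).
Proof. by have := Elat_finF (finF_set1 t) finF_set0; rewrite setI0. Qed.

Lemma Elat_pt2 (t : T) : Elat (pt2 t).
Proof. by have := Elat_finF finF_set0 (finF_set1 t); rewrite set0I. Qed.

Lemma le3_Btriple A C A' C' : A `<=` A' -> C `<=` C' ->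
  le3 (A, A `&` C, C) (A', A' `&` C', C').
Proof. by move=> AA' CC'; split=> //=; apply: setISS. Qed.

Lemma infinite_atoms_below_Elat1 : infinite_set [set: T] ->
  infinite_set (atoms_below (@Elat T) ([set: T], set0, set0)).
Proof.
move=> Tinf; apply: sub_infinite_image (@pt1_inj T) Tinf _ => _ [t _ <-].
by split; [apply: is_atom_pt1; [apply: Elat_bot3 | apply: Elat_pt1] | split].
Qed.

Lemma infinite_atoms_below_Elat2 : infinite_set [set: T] ->
  infinite_set (atoms_below (@Elat T) (set0, [set: T], set0)).
Proof.
move=> Tinf; apply: sub_infinite_image (@pt2_inj T) Tinf _ => _ [t _ <-].
by split; [apply: is_atom_pt2; [apply: Elat_bot3 | apply: Elat_pt2] | split].
Qed.

Lemma finite_atoms_below_Blat A C : finite_set A -> finite_set C ->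
  finite_set (atoms_below (@Blat T) (A, A `&` C, C)).
Proof.
move=> fA fC; have fin_pts : finite_set (@pt1 T @` A `|` @pt3 T @` C).
  by rewrite finite_setU; split; apply: finite_image.
apply: sub_finite_set fin_pts.
move=> a [a_atom ale]; case: (a_atom) => -[P [Q [_ _ _ aE]]] _ _; subst a.
case: ale => /= PA _ QC.
have [P0|/set0P[t Pt]] := eqVneq P set0; last first.
  left; exists t; first exact: PA.
  apply: (is_atom_eq Blat_bot3 a_atom (Blat_pt1 t) (@pt1_not_bot3 _ t)).
  by split=> //= s ->.
have [Q0|/set0P[t Qt]] := eqVneq Q set0; last first.
  right; exists t; first exact: QC.
  apply: (is_atom_eq Blat_bot3 a_atom (Blat_pt3 t) (@pt3_not_bot3 _ t)).
  by split=> //= s ->.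
by case: (is_atom_not_bot3 Blat_bot3 a_atom); rewrite P0 Q0; split=> // s [].
Qed.

Lemma infinite_atoms_below_Blat A C : infinite_set [set: T] -> cofinite_set A ->
  infinite_set (atoms_below (@Blat T) (A, A `&` C, C)).
Proof.
move=> Tinf cA; have Ainf := cofinite_set_infinite Tinf cA.
apply: sub_infinite_image (@pt1_inj T) Ainf _ => _ [t At <-].
split; first by apply: is_atom_pt1; [apply: Blat_bot3 | apply: Blat_pt1].
by split=> //= s ->.
Qed.

Lemma Blat_infinite_atoms_below x :
  Blat x -> infinite_set (atoms_below (@Blat T) x) ->
  exists A C, [/\ cofinite_set A, cofinite_set C & x = (A, A `&` C, C)].
Proof.
case=> A [C [_ _ [[fA fC]|[cA cC]] ->]] xinf; last by exists A, C.
by case: xinf; apply: finite_atoms_below_Blat.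
Qed.

Lemma order_iso_Blat_preimage f x :
  order_iso (@Blat T) (@Elat T) f -> Blat x -> infinite_set (atoms_below (@Elat T) (f x)) ->
  exists A C, [/\ cofinite_set A, cofinite_set C & x = (A, A `&` C, C)].
Proof.
move=> iso Bx fxinf; apply: Blat_infinite_atoms_below => //.
by move=> /(finite_atoms_below_order_iso iso Bx).
Qed.

End Lattices.

Theorem proposition5p9 (T : Type) (kappa_infinite : ~ finite_set [set: T]) :
  ~ exists f : triple T -> triple T, order_iso (@Blat T) (@Elat T) f.
Proof.
move=> [f iso]; case: (iso) => _ _ fsurj fle.
have cof := order_iso_Blat_preimage iso.
have [xu Bxu fxu] : exists2 x, Blat x & f x = ([set: T], set0, set0).
  by apply: fsurj; have := Elat_finF (finF_setT T) (finF_set0 T); rewrite setI0.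
have [xv Bxv fxv] : exists2 x, Blat x & f x = (set0, [set: T], set0).
  by apply: fsurj; have := Elat_finF (finF_set0 T) (finF_setT T); rewrite set0I.
have := infinite_atoms_below_Elat1 kappa_infinite; rewrite -fxu.
move=> /(cof _ Bxu)[A [C [cA cC xuE]]].
have := infinite_atoms_below_Elat2 kappa_infinite; rewrite -fxv.
move=> /(cof _ Bxv)[A' [C' [cA' cC' xvE]]].
have cAA' : cofinite_set (A `&` A') by rewrite cofinite_setI.
pose w := (A `&` A', (A `&` A') `&` (C `&` C'), C `&` C').
have Bw : Blat w by apply: Blat_cofinite cAA' _; rewrite cofinite_setI.
have fw_bot3 : le3 (f w) (bot3 T).
  have [_ fw2 fw3] : le3 (f w) ([set: T], set0, set0).
    rewrite -fxu; apply/(fle _ _ Bw Bxu).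
    by rewrite xuE; apply: le3_Btriple; apply: subIsetl.
  have [fw1 _ _] : le3 (f w) (set0, [set: T], set0).
    rewrite -fxv; apply/(fle _ _ Bw Bxv).
    by rewrite xvE; apply: le3_Btriple; apply: subIsetr.
  by split.
case: (infinite_atoms_below_Blat (C := C `&` C') kappa_infinite cAA').
apply/(finite_atoms_below_order_iso iso Bw).
by rewrite (atoms_below_bot3 (@Elat_bot3 T)).
Qed.
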